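(* Let $d$ be a positive integer, let $\varepsilon>0$, and let $\omega_N\subset\mathbb{S}^{d-1}$ be a set of $N\ge 3$ distinct points. Assume that for any three distinct points $x,y,z\in\omega_N$, $$\langle x,y\rangle\langle x,z\rangle\langle y,z\rangle\le-\varepsilon.$$ Then $N\le 1+\frac{1}{\varepsilon}$.
   Context: $\langle\cdot,\cdot\rangle$ is the Euclidean inner product and $\mathbb{S}^{d-1}$ is the unit sphere in $\mathbb{R}^d$. *)

From HB Require Import structures.
From mathcomp Require Import all_boot all_order all_algebra.
From mathcomp Require Import reals.
Set Implicit Arguments. Unset Strict Implicit. Unset Printing Implicit Defensive.
Import Order.TTheory GRing.Theory Num.Theory.
Local Open Scope ring_scope.

Definition dotp (R : realType) (d : nat) (u v : 'rV[R]_d) : R :=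
  \sum_(i < d) u 0 i * v 0 i.

Definition on_sphere (R : realType) (d : nat) (u : 'rV[R]_d) : Prop :=
  dotp u u = 1.

From HB Require Import structures.
From mathcomp Require Import all_boot all_order all_algebra.
From mathcomp Require Import reals.
From mathcomp Require Import lra zify.
Set Implicit Arguments.
Unset Strict Implicit.
Unset Printing Implicit Defensive.

Import Order.TTheory GRing.Theory Num.Theory.
Local Open Scope ring_scope.

(* The Gram matrix g of the points is positive semidefinite with unit
   diagonal.  The triple condition forces |g_ij| >= eps off the diagonal and
   g_0i g_0j g_ij < 0, so the signs t_i := sg g_0i (and t_0 := -1) make every
   off-diagonal entry of the Gram matrix of the t_i x_i equal to -|g_ij|.
   Hence 0 <= |sum_i t_i x_i|^2 <= N - N (N - 1) eps. *)

Lemma exists_ord_neq2 n (i j : 'I_n) :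
  (3 <= n)%N -> exists k : 'I_n, (i != k) && (j != k).
Proof.
move=> n_ge3; have : (0 < #|[predC pred2 i j]|)%N.
  have := cardC (pred2 i j); rewrite card2 card_ord; set m := #|_|.
  by case: (i != j) => /=; lia.
by case/card_gt0P => k; rewrite !inE negb_or ![k == _]eq_sym; exists k.
Qed.

Section InnerProduct.
Variables (R : realType) (d : nat).
Implicit Types u v : 'rV[R]_d.

Lemma dotpC u v : dotp u v = dotp v u.
Proof. by apply: eq_bigr => k _; rewrite mulrC. Qed.

Lemma dotp_ge0 u : 0 <= dotp u u.
Proof. by apply: sumr_ge0 => k _; rewrite -expr2 sqr_ge0. Qed.

Lemma normr_dotp_le u v : `|dotp u v| *+ 2 <= dotp u u + dotp v v.
Proof.
rewrite -normrMn ler_norml lerNl /dotp -sumrMnl -sumrN -!big_split /=.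
by apply/andP; split; apply: ler_sum => k _;
  [have := sqr_ge0 (u 0 k + v 0 k); rewrite sqrrD
  |have := sqr_ge0 (u 0 k - v 0 k); rewrite sqrrB]; lra.
Qed.

Lemma normr_dotp_le1 u v : on_sphere u -> on_sphere v -> `|dotp u v| <= 1.
Proof. by move=> uu1 vv1; have := normr_dotp_le u v; rewrite uu1 vv1; lra. Qed.

Lemma dotp_sumZl (I : finType) (t : I -> R) (x : I -> 'rV[R]_d) v :
  dotp (\sum_i t i *: x i) v = \sum_i t i * dotp (x i) v.
Proof.
rewrite /dotp (eq_bigr (fun k => \sum_i t i * (x i 0 k * v 0 k))).
  by rewrite exchange_big; apply: eq_bigr => i _; rewrite mulr_sumr.
by move=> k _; rewrite summxE mulr_suml; apply: eq_bigr => i _; rewrite mxE mulrA.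
Qed.

Lemma gram_form_ge0 n (x : 'I_n -> 'rV[R]_d) (t : 'I_n -> R) :
  0 <= \sum_i \sum_j t i * t j * dotp (x i) (x j).
Proof.
have -> : \sum_i \sum_j t i * t j * dotp (x i) (x j) =
          dotp (\sum_i t i *: x i) (\sum_j t j *: x j).
  rewrite dotp_sumZl; apply: eq_bigr => i _.
  rewrite dotpC dotp_sumZl mulr_sumr; apply: eq_bigr => j _.
  by rewrite dotpC mulrA.
exact: dotp_ge0.
Qed.

End InnerProduct.

Section SignedGram.
Variables (R : realFieldType) (n : nat) (g : 'I_n -> 'I_n -> R) (eps : R).
Hypotheses (eps_gt0 : 0 < eps) (n_ge3 : (3 <= n)%N).
Hypotheses (g_sym : forall i j, g i j = g j i) (g_diag : forall i, g i i = 1).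
Hypothesis g_norm_le1 : forall i j, `|g i j| <= 1.
Hypothesis g_triple : forall i j k, i != j -> i != k -> j != k ->
  g i j * g i k * g j k <= - eps.

Lemma norm_offdiag_ge i j : i != j -> eps <= `|g i j|.
Proof.
move=> ij; have [k /andP [ik jk]] := exists_ord_neq2 i j n_ge3.
have := g_triple ij ik jk.
rewrite -lerNr => /le_trans/(_ (ler_norm _)); rewrite normrN !normrM -mulrA.
move=> /le_trans; apply; apply: ler_piMr => //.
by apply: mulr_ile1.
Qed.

Lemma offdiag_neq0 i j : i != j -> g i j != 0.
Proof. by move/norm_offdiag_ge; rewrite -normr_gt0; apply: lt_le_trans. Qed.

Section FlipSign.
Variable i0 : 'I_n.

Definition flip_sign i : R := if i == i0 then -1 else Num.sg (g i0 i).

Lemma flip_sign_sqr i : flip_sign i * flip_sign i = 1.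
Proof.
rewrite /flip_sign; case: eqVneq => [_ | i_neq]; first by rewrite mulrNN mulr1.
by rewrite -expr2 sqr_sg offdiag_neq0 // eq_sym.
Qed.

Lemma flip_sign_offdiag_i0 j :
  j != i0 -> flip_sign i0 * flip_sign j * g i0 j = - `|g i0 j|.
Proof.
by move=> /negbTE j_neq; rewrite /flip_sign eqxx j_neq mulN1r mulNr -normrEsg.
Qed.

Lemma flip_sign_offdiag_triple i j : i != i0 -> j != i0 -> i != j ->
  flip_sign i * flip_sign j * g i j = - `|g i j|.
Proof.
move=> i_neq j_neq ij; rewrite /flip_sign (negbTE i_neq) (negbTE j_neq).
have triple_lt0 : g i0 i * g i0 j * g i j < 0.
  by apply: le_lt_trans (g_triple _ _ ij) _; rewrite ?oppr_lt0 // eq_sym.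
by rewrite {1}[g i j]numEsg mulrA -!sgrM (ltr0_sg triple_lt0) mulN1r.
Qed.

Lemma flip_sign_offdiag i j :
  i != j -> flip_sign i * flip_sign j * g i j = - `|g i j|.
Proof.
move=> ij; have [i_eq | i_neq] := eqVneq i i0.
  by rewrite i_eq flip_sign_offdiag_i0 // -i_eq eq_sym.
have [j_eq | j_neq] := eqVneq j i0; last exact: flip_sign_offdiag_triple.
by rewrite j_eq [_ * flip_sign i0]mulrC g_sym flip_sign_offdiag_i0.
Qed.

Lemma signed_gram_row_le i :
  \sum_j flip_sign i * flip_sign j * g i j <= 1 - n.-1%:R * eps.
Proof.
rewrite (bigD1 i) //= flip_sign_sqr g_diag mulr1 lerD2l.
have -> : n.-1%:R * eps = \sum_(j | j != i) eps.
  by rewrite sumr_const cardC1 card_ord mulr_natl.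
rewrite -lerN2 opprK -sumrN; apply: ler_sum => j ji.
by rewrite flip_sign_offdiag ?opprK ?norm_offdiag_ge // eq_sym.
Qed.

End FlipSign.

Hypothesis g_psd : forall t : 'I_n -> R, 0 <= \sum_i \sum_j t i * t j * g i j.

Lemma signed_gram_card_le : n%:R <= 1 + eps^-1.
Proof.
pose i0 : 'I_n := Ordinal (ltnW (ltnW n_ge3)).
have := le_trans (g_psd (flip_sign i0))
  (ler_sum _ (fun i _ => signed_gram_row_le i0 i)).
rewrite sumr_const card_ord -[_ *+ n]mulr_natl pmulr_rge0 ?ltr0n ?subr_ge0; last lia.
rewrite -ler_pdivlMr // div1r => n1_le.
by rewrite -[n]prednK ?mulrS ?lerD2l //; lia.
Qed.

End SignedGram.

Theorem lemma3p4 (R : realType) (d N : nat) (eps : R)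
  (x : 'I_N -> 'rV[R]_d) :
  (0 < d)%N -> 0 < eps -> (3 <= N)%N ->
  injective x ->
  (forall i, on_sphere (x i)) ->
  (forall i j k, i != j -> i != k -> j != k ->
     dotp (x i) (x j) * dotp (x i) (x k) * dotp (x j) (x k) <= - eps) ->
  (N%:R : R) <= 1 + 1 / eps.
Proof.
move=> _ eps_gt0 N_ge3 _ x_sphere x_triple.
rewrite div1r; apply: (signed_gram_card_le (g := fun i j => dotp (x i) (x j))).
- exact: eps_gt0.
- exact: N_ge3.
- by move=> i j; apply: dotpC.
- by move=> i; apply: x_sphere.
- by move=> i j; apply: normr_dotp_le1.
- exact: x_triple.
- by move=> t; apply: gram_form_ge0.
Qed.
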